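(* Let $\Pi=\{R_1,\dots,R_n\}$ be a logic program and let $\mathbb{P}_\Pi$ be the $\mathrm{LP}^{\mathrm{MLN}}$ program $\{\alpha:R_1,\dots,\alpha:R_n\}$. The (deterministic) stable models of $\Pi$ are exactly the (probabilistic) stable models $I$ of $\mathbb{P}_\Pi$ with $W_{\mathbb{P}_\Pi}(I)=e^{k\alpha}$, where $k$ is the number of all ground rules of $\Pi$. Moreover, if $\Pi$ has at least one stable model, then all (probabilistic) stable models of $\mathbb{P}_\Pi$ have the same probability, and are thus the stable models of $\Pi$ as well.
   Context: Fix a first-order signature $\sigma$ with no function constants of positive arity; Herbrand interpretations are identified with sets of ground atoms. A formula is negative if every occurrence of every atom is in the scope of negation. A rule has the form $A\leftarrow B\wedge N$ ($A$ a possibly empty disjunction of atoms, $B$ a conjunction of atoms, $N$ a negative formula), identified with $B\wedge N\rightarrow A$; a logic program is a finite set of rules, identified with its ground instance. For a ground program $\Pi$, the reduct $\Pi^I$ consists of $A\leftarrow B$ for all rules $A\leftarrow B\wedge N$ in $\Pi$ with $I\models N$; $I$ is a (deterministic) stable model of $\Pi$ if $I$ is a minimal Herbrand model of $\Pi^I$. An $\mathrm{LP}^{\mathrm{MLN}}$ program $\Pi$ is a finite set of weighted rules $w:R$, $w$ a real number or the symbol $\alpha$ (''infinite weight''), identified with its ground instance (weights inherited). $\overline{\Pi}=\{R\mid w:R\in\Pi\}$; $\Pi_I=\{w:R\in\Pi\mid I\models R\}$; $\mathrm{SM}[\Pi]=\{I\mid I\text{ is a stable model of }\overline{\Pi_I}\}$.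 With $\alpha$ treated as a real parameter, the weight is $W_\Pi(I)=\exp(\sum_{w:R\in\Pi_I}w)$ if $I\in\mathrm{SM}[\Pi]$ and $0$ otherwise; the probability is $P_\Pi(I)=\lim_{\alpha\to\infty}W_\Pi(I)/\sum_{J\in\mathrm{SM}[\Pi]}W_\Pi(J)$. $I$ is a (probabilistic) stable model of $\Pi$ if $P_\Pi(I)\neq 0$. *)

From Stdlib Require Import Reals.
From Coquelicot Require Import Coquelicot.
From mathcomp Require Import all_boot.

Set Implicit Arguments.
Unset Strict Implicit.
Unset Printing Implicit Defensive.

Section LP.
Variable A : finType.  (* ground atoms (the Herbrand base) *)

Inductive formula : Type :=
| FAtom of A
| FBot
| FTop
| FNot of formula
| FAnd of formula & formula
| FOr of formula & formula
| FImp of formula & formula.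

Fixpoint fsat (I : {set A}) (F : formula) : bool :=
  match F with
  | FAtom a => a \in I
  | FBot => false
  | FTop => true
  | FNot G => ~~ fsat I G
  | FAnd G H => fsat I G && fsat I H
  | FOr G H => fsat I G || fsat I H
  | FImp G H => fsat I G ==> fsat I H
  end.

Fixpoint negative (F : formula) : bool :=
  match F with
  | FAtom _ => false
  | FBot | FTop => true
  | FNot _ => true
  | FAnd G H | FOr G H | FImp G H => negative G && negative H
  end.

(* Ground rule  A <- B /\ N : head is a (possibly empty) disjunction of
   atoms, pos_body a conjunction of atoms, neg_body a (negative) formula. *)
Record rule : Type := Rule {
  head : seq A;
  pos_body : seq A;
  neg_body : formula
}.

Definition rsat (I : {set A}) (r : rule) : bool :=
  (all (fun a => a \in I) (pos_body r) && fsat I (neg_body r)) ==>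
  has (fun a => a \in I) (head r).

(* Ground logic program (the ground instance of a program). *)
Definition program := seq rule.

(* Positive rules A <- B of the reduct, as (head, body) pairs. *)
Definition reduct (P : program) (I : {set A}) : seq (seq A * seq A) :=
  [seq (head r, pos_body r) | r <- P & fsat I (neg_body r)].

Definition pmodel (P : seq (seq A * seq A)) (J : {set A}) : bool :=
  all (fun c => all (fun a => a \in J) c.2 ==> has (fun a => a \in J) c.1) P.

Definition minimal_model (P : seq (seq A * seq A)) (I : {set A}) : bool :=
  pmodel P I && [forall J : {set A}, (J \proper I) ==> ~~ pmodel P J].

Definition stable_model (P : program) (I : {set A}) : bool :=
  minimal_model (reduct P I) I.

Local Open Scope R_scope.
Inductive weight : Type := WReal of R | WAlpha.

Definition wval (alpha : R) (w : weight) : R :=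
  match w with WReal x => x | WAlpha => alpha end.

Definition mln_program := seq (weight * rule).

Definition mln_sat (P : mln_program) (I : {set A}) : mln_program :=
  [seq wr <- P | rsat I wr.2].

Definition mln_rules (P : mln_program) : program := [seq wr.2 | wr <- P].

Definition in_SM (P : mln_program) (I : {set A}) : bool :=
  stable_model (mln_rules (mln_sat P I)) I.

(* W_Pi(I), as a function of the real parameter alpha. *)
Definition mln_weight (P : mln_program) (I : {set A}) (alpha : R) : R :=
  if in_SM P I
  then exp (foldr Rplus R0 [seq wval alpha wr.1 | wr <- mln_sat P I])
  else 0.

(* P_Pi(I) = lim_{alpha -> oo} W(I) / sum_{J in SM} W(J)
   (W(J) = 0 for J not in SM, so the sum may range over all J). *)
Definition mln_prob (P : mln_program) (I : {set A}) : R :=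
  real (Lim (fun alpha => mln_weight P I alpha /
     foldr Rplus R0 [seq mln_weight P J alpha | J <- enum [set: {set A}]])
     p_infty).

Definition prob_stable_model (P : mln_program) (I : {set A}) : Prop :=
  mln_prob P I <> 0.

Definition hard_program (P : program) : mln_program :=
  [seq (WAlpha, r) | r <- P].
End LP.

From Stdlib Require Import Reals Lra.
From Coquelicot Require Import Coquelicot.
From mathcomp Require Import all_boot.

(* Every rule of the hard program carries weight alpha, so an interpretation I
   satisfying k of the n rules of Pi has weight e^{k alpha} if it is a stable
   model of the rules it satisfies and 0 otherwise; since a stable model is a
   model, I is a stable model of Pi exactly when, in addition, k = n.
   After rescaling all weights by e^{-n alpha}, the weight of I tends to 1 if
   I is a stable model of Pi and to 0 otherwise.  Hence, when Pi has N > 0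
   stable models, each of them has probability 1/N and every other
   interpretation has probability 0. *)

Set Implicit Arguments.
Unset Strict Implicit.
Unset Printing Implicit Defensive.

Local Open Scope R_scope.

Lemma foldr_Rplus_map_mulr (T : Type) (s : seq T) (f : T -> R) (c : R) :
  foldr Rplus 0 [seq f x | x <- s] * c = foldr Rplus 0 [seq f x * c | x <- s].
Proof. by elim: s => [|x s IHs] /=; [ring | rewrite -IHs; ring]. Qed.

Lemma foldr_Rplus_indicator (T : Type) (p : pred T) (s : seq T) :
  foldr Rplus 0 [seq if p x then 1 else 0 | x <- s] = INR (count p s).
Proof.
elim: s => [|x s IHs] //=; rewrite IHs plus_INR.
by case: (p x) => /=; ring.
Qed.

Lemma is_lim_foldr_Rplus (T : Type) (s : seq T) (f : T -> R -> R) (l : T -> R)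
    (x : Rbar) :
  (forall t, is_lim (f t) x (l t)) ->
  is_lim (fun y => foldr Rplus 0 [seq f t y | t <- s]) x
    (foldr Rplus 0 [seq l t | t <- s]).
Proof.
move=> lim_f; elim: s => [|t s IHs] /=; first exact: is_lim_const.
exact: is_lim_plus'.
Qed.

Lemma is_lim_exp_mul_neg (c : R) :
  c < 0 -> is_lim (fun y => exp (c * y)) p_infty 0.
Proof.
move=> c_lt0; apply: (is_lim_comp exp (fun y => c * y) p_infty 0 m_infty).
- exact: is_lim_exp_m.
- have cp_infty : Rbar_mult c p_infty = m_infty.
    exact/is_Rbar_mult_unique/is_Rbar_mult_sym/is_Rbar_mult_p_infty_neg.
  by rewrite -cp_infty; apply: is_lim_scal_l; apply: is_lim_id.
- by exists 0.
Qed.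

Section HardProgram.
Variables (A : finType) (Pi : program A).

Lemma stable_model_sat (I : {set A}) : stable_model Pi I -> all (rsat I) Pi.
Proof.
rewrite /stable_model /minimal_model /reduct => /andP[+ _].
elim: Pi => [|r P IHP] //=.
rewrite /rsat; case: (fsat I (neg_body r)) => /=; last by rewrite andbF; exact: IHP.
by rewrite andbT => /andP[-> /IHP].
Qed.

Lemma stable_modelE (I : {set A}) :
  stable_model Pi I = all (rsat I) Pi && stable_model [seq r <- Pi | rsat I r] I.
Proof.
have [sat_all | not_sat_all] := boolP (all (rsat I) Pi).
  by rewrite (all_filterP sat_all).
by apply/negbTE; apply: contraNN not_sat_all; apply: stable_model_sat.
Qed.

Lemma mln_sat_hard (I : {set A}) :
  mln_sat (hard_program Pi) I = hard_program [seq r <- Pi | rsat I r].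
Proof. by rewrite /mln_sat /hard_program filter_map. Qed.

Lemma mln_rules_hard (P : program A) : mln_rules (hard_program P) = P.
Proof. by rewrite /mln_rules /hard_program -map_comp map_id. Qed.

Lemma foldr_wval_hard (P : program A) (alpha : R) :
  foldr Rplus 0 [seq wval alpha wr.1 | wr <- hard_program P] = INR (size P) * alpha.
Proof.
elim: P => [|r P IHP]; first by rewrite /=; ring.
by rewrite [LHS]/= IHP (S_INR (size P)); ring.
Qed.

Lemma mln_weight_hard (I : {set A}) (alpha : R) :
  mln_weight (hard_program Pi) I alpha =
  if stable_model [seq r <- Pi | rsat I r] I
  then exp (INR (count (rsat I) Pi) * alpha) else 0.
Proof.
by rewrite /mln_weight /in_SM mln_sat_hard mln_rules_hard foldr_wval_hard size_filter.
Qed.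

Lemma stable_model_hard_weight (I : {set A}) :
  stable_model Pi I <->
  forall alpha, mln_weight (hard_program Pi) I alpha = exp (INR (size Pi) * alpha).
Proof.
rewrite stable_modelE all_count; split.
  by case/andP=> /eqP count_sat stable_sat alpha; rewrite mln_weight_hard stable_sat count_sat.
move/(_ 1); rewrite mln_weight_hard.
case: ifP => [stable_sat | _ /esym]; last by have := exp_pos (INR (size Pi) * 1); lra.
by move/exp_inv; rewrite !Rmult_1_r => /INR_eq ->; rewrite eqxx.
Qed.

Lemma is_lim_mln_weight_hard_scaled (I : {set A}) :
  is_lim (fun alpha => mln_weight (hard_program Pi) I alpha * exp (- (INR (size Pi) * alpha)))
    p_infty (if stable_model Pi I then 1 else 0).
Proof.
rewrite stable_modelE all_count.
have [stable_sat | unstable_sat] := boolP (stable_model [seq r <- Pi | rsat I r] I); last first.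
  rewrite andbF; apply: (is_lim_ext (fun _ => 0)); last exact: is_lim_const.
  by move=> alpha; rewrite mln_weight_hard (negbTE unstable_sat) Rmult_0_l.
rewrite andbT; apply: (is_lim_ext (fun alpha => exp ((INR (count (rsat I) Pi) - INR (size Pi)) * alpha))).
  by move=> alpha; rewrite mln_weight_hard stable_sat -exp_plus; congr exp; ring.
have [-> | count_neq] := eqVneq (count (rsat I) Pi) (size Pi).
  apply: (is_lim_ext (fun _ => 1)); last exact: is_lim_const.
  by move=> alpha; rewrite Rminus_diag Rmult_0_l exp_0.
apply: is_lim_exp_mul_neg; apply/Rlt_minus/lt_INR/ltP.
by rewrite ltn_neqAle count_neq count_size.
Qed.

Let n_stable : nat := count (stable_model Pi) (enum [set: {set A}]).

Lemma n_stable_neq0 (I0 : {set A}) : stable_model Pi I0 -> INR n_stable <> 0.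
Proof.
move=> stable_I0; apply/not_0_INR/eqP; rewrite -lt0n -has_count.
by apply/hasP; exists I0; rewrite ?mem_enum ?in_setT.
Qed.

(* Dividing numerator and denominator of the quotient defining mln_prob by
   e^{n alpha} does not change it, and makes both sides converge. *)
Lemma mln_prob_hard (I0 : {set A}) : stable_model Pi I0 ->
  forall I, mln_prob (hard_program Pi) I = if stable_model Pi I then / INR n_stable else 0.
Proof.
move=> stable_I0 I; set W := mln_weight (hard_program Pi).
have lim_num := @is_lim_mln_weight_hard_scaled I.
have lim_den := is_lim_foldr_Rplus (s := enum [set: {set A}]) is_lim_mln_weight_hard_scaled.
rewrite foldr_Rplus_indicator -/n_stable in lim_den.
have lim_den_neq0 : Rbar.Finite (INR n_stable) <> Rbar.Finite 0.
  by move=> [/(n_stable_neq0 stable_I0)].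
have lim_quot := is_lim_div _ _ _ _ _ lim_num lim_den lim_den_neq0 Logic.I.
rewrite /mln_prob -/W (is_lim_unique _ _ _ (is_lim_ext _ _ _ _ _ lim_quot)) /=.
  by case: (stable_model Pi I); rewrite /Rdiv ?Rmult_1_l ?Rmult_0_l.
move=> alpha; rewrite -(foldr_Rplus_map_mulr _ (fun J => W J alpha)) /Rdiv Rinv_mult.
rewrite (Rmult_comm (/ foldr _ _ _)) -Rmult_assoc (Rmult_assoc (W I alpha)) Rinv_r ?Rmult_1_r //.
exact/Rgt_not_eq/exp_pos.
Qed.

Lemma prob_stable_model_hard (I0 : {set A}) : stable_model Pi I0 ->
  forall I, prob_stable_model (hard_program Pi) I <-> stable_model Pi I.
Proof.
move=> stable_I0 I; rewrite /prob_stable_model (mln_prob_hard stable_I0).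
case: (stable_model Pi I); split=> // _; apply: Rinv_neq_0_compat.
exact: n_stable_neq0 stable_I0.
Qed.

End HardProgram.

Theorem theorem1 (A : finType) (Pi : program A) :
  (forall r, List.In r Pi -> negative (neg_body r)) ->
  (forall I : {set A},
     stable_model Pi I <->
     (prob_stable_model (hard_program Pi) I /\
      forall alpha : R,
        mln_weight (hard_program Pi) I alpha = exp (Rmult (INR (size Pi)) alpha))) /\
  ((exists I : {set A}, stable_model Pi I) ->
     (forall I J : {set A},
        prob_stable_model (hard_program Pi) I ->
        prob_stable_model (hard_program Pi) J ->
        mln_prob (hard_program Pi) I = mln_prob (hard_program Pi) J) /\
     (forall I : {set A},
        prob_stable_model (hard_program Pi) I -> stable_model Pi I)).
Proof.
move=> _; split.
  move=> I; rewrite -stable_model_hard_weight; split=> [stable_I | [] //].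
  by split=> //; apply/(prob_stable_model_hard stable_I).
case=> I0 stable_I0; have stableE := prob_stable_model_hard stable_I0.
split=> [I J /stableE stable_I /stableE stable_J | I /stableE //].
by rewrite !(mln_prob_hard stable_I0) stable_I stable_J.
Qed.
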